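(* The InDC method (with $M$ uniform quadrature nodes excluding the left-most point) constructed with stiffly accurate IRK methods with invertible coefficient matrices in the prediction and correction steps can be considered again as an implicit Runge–Kutta method, which is stiffly accurate and whose Butcher coefficient matrix $A$ is invertible.
   Context: InDC-IRK method for an ODE $y'=F(y)$ over one step $[t_n,t_n+H]$: nodes $\tau_m=t_n+mh$, $h=H/M$; $\alpha_j$ ($j=1,\dots,M$) the Lagrange basis polynomials of degree $M-1$ for $\tau_1,\dots,\tau_M$; $S^m(\bar w)=\frac1h\sum_jw_j\int_{\tau_m}^{\tau_{m+1}}\alpha_j$, $S^{c_{mi}}(\bar w)=\frac1h\sum_jw_j\int_{\tau_m}^{\tau_m+c_ih}\alpha_j$, $P^{c_{mi}}(\bar w)=\sum_jw_j\alpha_j(\tau_m+c_ih)$. Prediction: IRK method (tableau $A^{(0)},b^{(0)},c^{(0)}$) on each substep with step $h$. Correction $k=1,\dots,K$ (tableau $(a_{ij}),(b_i),(c_i)$): $y^{(k)}_0=y_n$, $Y_{mi}=y^{(k)}_m+hS^{c_{mi}}(\bar F^{(k-1)})+h\sum_ja_{ij}\Delta K_{mj}$, $y^{(k)}_{m+1}=y^{(k)}_m+hS^m(\bar F^{(k-1)})+h\sum_ib_i\Delta K_{mi}$, $\Delta K_{mi}=F(Y_{mi})-P^{c_{mi}}(\bar F^{(k-1)})$, $\bar F^{(k-1)}=(F(y^{(k-1)}_j))_{j=1}^M$; output $y^{(K)}_M$. A RK method is stiffly accurate if $b^T=e_s^TA$ (last row of $A$ equals $b^T$). *)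

From mathcomp Require Import all_boot all_order all_algebra.
Set Implicit Arguments. Unset Strict Implicit. Unset Printing Implicit Defensive.
Import Order.TTheory GRing.Theory Num.Theory.
Local Open Scope ring_scope.

Section InDC.
Variable R : realFieldType.

Definition poly_integral (p : {poly R}) (a b : R) : R :=
  \sum_(i < size p) p`_i * (b ^+ i.+1 - a ^+ i.+1) / (i.+1)%:R.

Definition stiffly_accurate (s : nat) (A : 'M[R]_s.+1) (b : 'I_s.+1 -> R) : Prop :=
  forall j : 'I_s.+1, A ord_max j = b j.

Definition substep (M : nat) (H : R) : R := H / M%:R.
Definition node (M : nat) (tn H : R) (m : nat) : R := tn + m%:R * substep M H.

(* Lagrange basis polynomial alpha_j (j : 'I_M corresponds to node tau_{j+1})
   of degree M-1 for the nodes tau_1, ..., tau_M. *)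
Definition lagr (M : nat) (tn H : R) (j : 'I_M) : {poly R} :=
  \prod_(l < M | l != j)
     (('X - (node M tn H l.+1)%:P) *
      ((node M tn H j.+1 - node M tn H l.+1)^-1)%:P).

Variable d : nat.
Notation V := 'rV[R]_d.

Definition S_int (M : nat) (tn H : R) (m : nat) (w : 'I_M -> V) : V :=
  (substep M H)^-1 *:
    \sum_(j < M) poly_integral (lagr tn H j) (node M tn H m) (node M tn H m.+1) *: w j.

Definition S_c (M : nat) (tn H : R) (m : nat) (ci : R) (w : 'I_M -> V) : V :=
  (substep M H)^-1 *:
    \sum_(j < M) poly_integral (lagr tn H j) (node M tn H m)
                    (node M tn H m + ci * substep M H) *: w j.

Definition P_c (M : nat) (tn H : R) (m : nat) (ci : R) (w : 'I_M -> V) : V :=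
  \sum_(j < M) (lagr tn H j).[node M tn H m + ci * substep M H] *: w j.

(* yout is an output y^{(K)}_M of one step of the InDC method (prediction with
   the tableau (A0,b0), K corrections with the tableau (A,b,c)) applied to
   y' = F(y) on [t_n, t_n + H] from y_n, i.e. there are values of all the
   (implicitly defined) unknowns satisfying all the defining equations.
   y k m = y^{(k)}_m, Yp m i = prediction stage i on substep m,
   Yc k m i = Y_{mi} in correction sweep k. *)
Definition InDC_output (M K : nat)
    (s0 : nat) (A0 : 'M[R]_s0.+1) (b0 : 'I_s0.+1 -> R)
    (s : nat) (A : 'M[R]_s.+1) (b : 'I_s.+1 -> R) (c : 'I_s.+1 -> R)
    (F : V -> V) (tn H : R) (yn yout : V) : Prop :=
  let h := substep M H in
  exists (y : nat -> nat -> V) (Yp : nat -> 'I_s0.+1 -> V)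
         (Yc : nat -> nat -> 'I_s.+1 -> V),
    let Fbar k := fun j : 'I_M => F (y k j.+1) in
        y 0%N 0%N = yn /\
        (forall m i, (m < M)%N ->
           Yp m i = y 0%N m + h *: \sum_(j < s0.+1) A0 i j *: F (Yp m j)) /\
        (forall m, (m < M)%N ->
           y 0%N m.+1 = y 0%N m + h *: \sum_(i < s0.+1) b0 i *: F (Yp m i)) /\
        (forall k, (1 <= k <= K)%N -> y k 0%N = yn) /\
        (forall k m i, (1 <= k <= K)%N -> (m < M)%N ->
           Yc k m i = y k m + h *: S_c tn H m (c i) (Fbar k.-1)
             + h *: \sum_(j < s.+1) A i j *:
                      (F (Yc k m j) - P_c tn H m (c j) (Fbar k.-1))) /\
        (forall k m, (1 <= k <= K)%N -> (m < M)%N ->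
           y k m.+1 = y k m + h *: S_int tn H m (Fbar k.-1)
             + h *: \sum_(i < s.+1) b i *:
                      (F (Yc k m i) - P_c tn H m (c i) (Fbar k.-1))) /\
        yout = y K M.

Definition RK_output (N : nat) (A : 'M[R]_N) (b : 'I_N -> R)
    (F : V -> V) (H : R) (yn yout : V) : Prop :=
  exists Y : 'I_N -> V,
    (forall i, Y i = yn + H *: \sum_(j < N) A i j *: F (Y j)) /\
    yout = yn + H *: \sum_(i < N) b i *: F (Y i).

End InDC.

(* Every quantity computed in one InDC step is [y_n] plus [H] times a fixed
   linear combination of the derivatives [F (Y u)] at the stages [u] of all
   prediction and correction sweeps; the weights do not depend on [t_n] or [H],
   because rescaling time maps the Lagrange basis for the nodes [tau_m] to the
   one for the nodes [1, ..., M].  Reading off these combinations gives a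
   Runge-Kutta tableau whose output is the last stage of the last sweep, hence
   a stiffly accurate one when both tableaux are and [c_s = 1].  Ordered by
   sweep and substep, each stage depends only on earlier blocks and on its own
   block, where the matrix is [A0 / M] or [A / M]: the tableau is block lower
   triangular with invertible diagonal blocks. *)

From mathcomp Require Import all_boot all_order all_algebra.
From mathcomp Require Import perm ring zify.
Set Implicit Arguments. Unset Strict Implicit. Unset Printing Implicit Defensive.
Import Order.TTheory GRing.Theory Num.Theory.
Local Open Scope ring_scope.

Section PolyFacts.
Variable R : numDomainType.

Lemma poly_horner_inj (p q : {poly R}) : (forall x, p.[x] = q.[x]) -> p = q.
Proof.
move=> pq; apply/eqP; rewrite -subr_eq0; apply/negPn/negP => nz.
have : (size [seq i%:R : R | i <- iota 0 (size (p - q)%R)] < size (p - q)%R)%N.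
  apply: max_poly_roots nz _ _.
    by apply/allP => x _; rewrite /root !hornerE pq subrr.
  by rewrite map_inj_uniq ?iota_uniq // => i j /eqP; rewrite eqr_nat => /eqP.
by rewrite size_map size_iota ltnn.
Qed.

Lemma deriv_eq0_polyC (q : {poly R}) : q^`() = 0 -> q = (q`_0)%:P.
Proof.
move=> dq; apply/polyP => -[|i]; rewrite coefC //=.
have /eqP := congr1 (fun p : {poly R} => p`_i) dq.
by rewrite coef_deriv coef0 mulrn_eq0 /= => /eqP.
Qed.

End PolyFacts.

Section PolyIntegral.
Variable R : realFieldType.
Implicit Types (p q : {poly R}) (a b h t : R).

Definition prim p : {poly R} := \sum_(i < size p) (p`_i / (i.+1)%:R) *: 'X^(i.+1).

Lemma deriv_prim p : (prim p)^`() = p.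
Proof.
rewrite /prim raddf_sum /= -[RHS]coefK poly_def; apply: eq_bigr => i _.
rewrite derivZ derivXn /= -scaler_nat scalerA -mulrA mulVf ?mulr1 //.
by rewrite pnatr_eq0.
Qed.

Lemma poly_integral_prim p a b :
  poly_integral p a b = (prim p).[b] - (prim p).[a].
Proof.
rewrite /poly_integral /prim !horner_sum -sumrB; apply: eq_bigr => i _.
by rewrite !hornerZ !hornerXn; ring.
Qed.

Lemma poly_integral_antideriv p q a b :
  q^`() = p -> poly_integral p a b = q.[b] - q.[a].
Proof.
move=> dq; have : (q - prim p)^`() = 0 by rewrite derivB dq deriv_prim subrr.
move=> /deriv_eq0_polyC dq0.
have -> : q = prim p + ((q - prim p)`_0)%:P by rewrite -dq0 addrC subrK.
by rewrite poly_integral_prim !hornerD !hornerC; ring.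
Qed.

Lemma poly_integral_comp_affine p h t a b : h != 0 ->
  poly_integral (p \Po (h^-1 *: ('X - t%:P))) a b =
  h * poly_integral p ((a - t) / h) ((b - t) / h).
Proof.
move=> h0; set q := h^-1 *: ('X - t%:P).
rewrite (@poly_integral_antideriv _ (h *: (prim p \Po q))).
  rewrite poly_integral_prim !hornerZ !horner_comp !hornerZ !hornerXsubC.
  by rewrite ![h^-1 * _]mulrC mulrBr.
rewrite derivZ deriv_comp deriv_prim derivZ derivXsubC -scalerAr mulr1.
by rewrite scalerA divff // scale1r.
Qed.

End PolyIntegral.

Section ReferenceNodes.
Variables (R : realFieldType) (M' : nat).
Local Notation M := M'.+1.

(* Reference configuration [t_n = 0], [H = M]: there [h = 1] and [tau_m = m]. *)
Definition ref_lagr (j : 'I_M) : {poly R} := lagr 0 M%:R j.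
Definition int_weight (m : nat) (ci : R) (j : 'I_M) : R :=
  poly_integral (ref_lagr j) m%:R (m%:R + ci).
Definition interp_weight (m : nat) (ci : R) (j : 'I_M) : R :=
  (ref_lagr j).[m%:R + ci].

Lemma substep_neq0 (H : R) : H != 0 -> substep M H != 0.
Proof. by move=> H0; rewrite mulf_neq0 // invr_eq0 pnatr_eq0. Qed.

Lemma node_ref (m : nat) : node M 0 M%:R m = m%:R :> R.
Proof. by rewrite /node /substep divff ?pnatr_eq0 // mulr1 add0r. Qed.

Lemma horner_lagr (tn H x : R) (j : 'I_M) : H != 0 ->
  (lagr tn H j).[x] = (ref_lagr j).[(x - tn) / substep M H].
Proof.
move=> H0; have h0 := substep_neq0 H0.
rewrite /ref_lagr /lagr !horner_prod; apply: eq_bigr => l _.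
rewrite !hornerM !hornerXsubC !hornerC !node_ref /node; set h := substep M H.
have -> : x - (tn + l.+1%:R * h) = ((x - tn) / h - l.+1%:R) * h by field.
have -> : tn + j.+1%:R * h - (tn + l.+1%:R * h) = (j.+1%:R - l.+1%:R) * h by ring.
by rewrite -mulf_div divff // mulr1.
Qed.

Lemma lagr_comp_affine (tn H : R) (j : 'I_M) : H != 0 ->
  lagr tn H j = ref_lagr j \Po ((substep M H)^-1 *: ('X - tn%:P)).
Proof.
move=> H0; apply: poly_horner_inj => x.
by rewrite horner_comp hornerZ hornerXsubC horner_lagr // mulrC.
Qed.

Lemma poly_integral_lagr (tn H ci : R) (m : nat) (j : 'I_M) : H != 0 ->
  poly_integral (lagr tn H j) (node M tn H m) (node M tn H m + ci * substep M H)
  = substep M H * int_weight m ci j.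
Proof.
move=> H0; have h0 := substep_neq0 H0.
rewrite lagr_comp_affine // poly_integral_comp_affine //.
by congr (_ * poly_integral _ _ _); rewrite /node; field.
Qed.

Lemma horner_lagr_node (tn H ci : R) (m : nat) (j : 'I_M) : H != 0 ->
  (lagr tn H j).[node M tn H m + ci * substep M H] = interp_weight m ci j.
Proof.
move=> H0; have h0 := substep_neq0 H0.
by rewrite horner_lagr //; congr (_.[_]); rewrite /node; field.
Qed.

End ReferenceNodes.

Section InDCWeights.
Variables (R : realFieldType) (M' d : nat).
Local Notation M := M'.+1.
Local Notation V := 'rV[R]_d.
Variables (tn H : R) (m : nat).

Lemma S_int_S_c (w : 'I_M -> V) : S_int tn H m w = S_c tn H m 1 w.
Proof.
rewrite /S_int /S_c; congr (_ *: _); apply: eq_bigr => j _.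
by congr (poly_integral _ _ _ *: _); rewrite /node mul1r -addn1 natrD; ring.
Qed.

(* The factor [h] makes both sides vanish for [H = 0], where [S_c] is junk. *)
Lemma scale_S_c (ci : R) (w : 'I_M -> V) :
  substep M H *: S_c tn H m ci w =
  substep M H *: \sum_(j < M) int_weight m ci j *: w j.
Proof.
have [->|H0] := eqVneq H 0; first by rewrite /substep mul0r !scale0r.
rewrite scalerA divff ?substep_neq0 // scale1r scaler_sumr.
by apply: eq_bigr => j _; rewrite poly_integral_lagr // scalerA.
Qed.

Lemma scale_sum_P_c n (coef cs : 'I_n -> R) (X : 'I_n -> V) (w : 'I_M -> V) :
  substep M H *: \sum_(i < n) coef i *: (X i - P_c tn H m (cs i) w) =
  substep M H *: \sum_(i < n) coef i *:
    (X i - \sum_(l < M) interp_weight m (cs i) l *: w l).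
Proof.
have [->|H0] := eqVneq H 0; first by rewrite /substep mul0r !scale0r.
congr (_ *: _); apply: eq_bigr => i _; congr (_ *: (_ - _)).
by apply: eq_bigr => l _; rewrite horner_lagr_node.
Qed.

End InDCWeights.

Section StageIndexedTableaux.
Variables (R : fieldType) (T : finType).
Implicit Types (a : T -> T -> R) (w : T -> R).

Definition rows_free a :=
  forall w, (forall u, \sum_t w t * a t u = 0) -> forall t, w t = 0.

Lemma sum_codom n (g : 'I_n -> T) (f : T -> R) : injective g ->
  (forall t, t \notin codom g -> f t = 0) -> \sum_t f t = \sum_i f (g i).
Proof.
move=> gI f0; rewrite (bigID [in codom g]) /= [X in _ + X]big1 ?addr0; last first.
  by move=> t /f0.
by rewrite -big_uniq ?big_image // map_inj_uniq ?enum_uniq.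
Qed.

Lemma block_triangular_rows_free (blk : T -> nat) a :
  (forall t u, (blk t < blk u)%N -> a t u = 0) ->
  (forall w t0, (forall t, blk t != blk t0 -> w t = 0) ->
     (forall u, blk u = blk t0 -> \sum_t w t * a t u = 0) -> w t0 = 0) ->
  rows_free a.
Proof.
move=> lower diag w wa t0; apply/eqP/negPn/negP => wt0.
(* restricting [w] to its highest nonzero block leaves the column sums of that
   block unchanged *)
have [t wt tmax] := @arg_maxnP T t0 (fun t => w t != 0) blk wt0.
pose wt' t' := if blk t' == blk t then w t' else 0.
suff : wt' t = 0 by rewrite /wt' eqxx; apply/eqP.
apply: diag => [t' | u ut]; first by rewrite /wt' => /negbTE ->.
rewrite -[RHS](wa u); apply: eq_bigr => t' _; rewrite /wt'.
case: eqP => // ne; have [->|w't'] := eqVneq (w t') 0; first by rewrite !mul0r.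
rewrite lower ?mulr0 // ut ltn_neqAle; apply/andP; split; [exact/eqP | exact: tmax].
Qed.

Lemma diag_block_vanish n (g : 'I_n -> T) (B : 'M[R]_n) a w :
  injective g -> B \in unitmx -> (forall i j, a (g i) (g j) = B i j) ->
  (forall t, t \notin codom g -> w t = 0) ->
  (forall j, \sum_t w t * a t (g j) = 0) -> forall i, w (g i) = 0.
Proof.
move=> gI uB aB w0 wa i; pose z : 'rV_n := \row_i w (g i).
have zB : z *m B = 0.
  apply/rowP => j; rewrite !mxE -[RHS](wa j) (sum_codom gI) => [|t /w0 ->]; last first.
    by rewrite mul0r.
  by apply: eq_bigr => i' _; rewrite !mxE aB.
have /rowP/(_ i) := mulmxK uB z; rewrite zB mul0mx !mxE => <-.
by [].
Qed.

Lemma rows_free_unitmx n (e : 'I_n -> T) a : bijective e -> rows_free a ->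
  \matrix_(i, j) a (e i) (e j) \in unitmx.
Proof.
move=> [e' eK e'K] fr; rewrite -row_free_unit -kermx_eq0.
apply/rowV0P => v /sub_kermxP vA; apply/rowP => q; rewrite !mxE -[q]eK.
apply: (fr (fun t => v 0 (e' t))) => u.
have /rowP/(_ (e' u)) := vA; rewrite !mxE => vAu; rewrite -[RHS]vAu.
rewrite (reindex e); last by apply: onW_bij; exists e'.
by apply: eq_bigr => i _; rewrite eK mxE e'K.
Qed.

Lemma ord_bij_last (t : T) :
  exists e : 'I_#|T|.-1.+1 -> T, bijective e /\ e ord_max = t.
Proof.
have cT : #|T| = #|T|.-1.+1 by rewrite prednK //; apply/card_gt0P; exists t.
pose e0 i := enum_val (cast_ord (esym cT) i).
pose e0' u := cast_ord cT (enum_rank u).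
have e0K : cancel e0 e0' by move=> i; rewrite /e0 /e0' enum_valK cast_ordKV.
have e0'K : cancel e0' e0 by move=> u; rewrite /e0 /e0' cast_ordK enum_rankK.
pose p := tperm (e0 ord_max) t.
exists (fun i => p (e0 i)); split; last by rewrite tpermL.
by exists (fun u => e0' ((p^-1)%g u)) => [i|u]; rewrite ?permK ?e0K ?e0'K ?permKV.
Qed.

End StageIndexedTableaux.

Section StageIndexedRK.
Variables (R : realFieldType) (T : finType) (d : nat).
Local Notation V := 'rV[R]_d.

Definition RK_output_on (a : T -> T -> R) (rb : T -> R) (F : V -> V)
    (H : R) (yn yout : V) : Prop :=
  exists Y : T -> V,
    (forall t, Y t = yn + H *: \sum_u a t u *: F (Y u)) /\
    yout = yn + H *: \sum_u rb u *: F (Y u).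

Lemma RK_output_relabel n (e : 'I_n -> T) a rb F H yn yout : bijective e ->
  RK_output (\matrix_(i, j) a (e i) (e j)) (fun j => rb (e j)) F H yn yout <->
  RK_output_on a rb F H yn yout.
Proof.
move=> [e' eK e'K].
have sumT (f : T -> V) : \sum_t f t = \sum_i f (e i).
  by rewrite (reindex e) //; apply: onW_bij; exists e'.
split=> [[Y [hY ->]] | [Y [hY ->]]].
  exists (Y \o e'); split => [t|]; rewrite /= ?hY sumT; congr (_ + _ *: _).
    by apply: eq_bigr => j _; rewrite mxE e'K eK.
  by apply: eq_bigr => j _; rewrite /= eK.
exists (Y \o e); split => [i|]; rewrite /= ?hY sumT //.
by under eq_bigr do rewrite mxE.
Qed.

End StageIndexedRK.

(* Stage [inl (m, i)] is stage [i] of the prediction on substep [m];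
   stage [inr (k, m, i)] is stage [i] of correction sweep [k.+1] on substep [m]. *)
Definition InDC_stage (M K s0 s : nat) : finType :=
  ('I_M * 'I_s0.+1 + 'I_K * 'I_M * 'I_s.+1)%type.

Section InDCTableau.
Variables (R : realFieldType) (M' K s0 s : nat).
Local Notation M := M'.+1.
Local Notation stage := (InDC_stage M K s0 s).
Variables (A0 : 'M[R]_s0.+1) (b0 : 'I_s0.+1 -> R).
Variables (A : 'M[R]_s.+1) (b : 'I_s.+1 -> R) (c : 'I_s.+1 -> R).

(* Sweeps and substeps are numbered by [nat] as in [InDC_output], sweep 0
   being the prediction; out-of-range indices give meaningless stages. *)
Definition pred_stage (m : nat) (i : 'I_s0.+1) : stage := inl (inord m, i).
Definition corr_stage (k m : nat) (i : 'I_s.+1) : stage :=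
  if insub k.-1 is Some kk then inr (kk, inord m, i) else inl (inord m, ord0).
Definition last_stage (k m : nat) : stage :=
  if k is 0 then pred_stage m ord_max else corr_stage k m ord_max.

Definition block (t : stage) : nat :=
  match t with inl p => p.1 | inr p => (p.1.1.+1 * M + p.1.2)%N end.

Lemma block_pred_stage m i : (m < M)%N -> block (pred_stage m i) = m.
Proof. by move=> mM; rewrite /= inordK. Qed.

Lemma block_corr_stage k m i : (0 < k <= K)%N -> (m < M)%N ->
  block (corr_stage k m i) = (k * M + m)%N.
Proof. by case: k => // k kK mM; rewrite /corr_stage /= insubT /= inordK. Qed.

Lemma block_last_stage k m : (k <= K)%N -> (m < M)%N ->
  block (last_stage k m) = (k * M + m)%N.
Proof.
case: k => [|k] kK mM; first by rewrite block_pred_stage.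
by rewrite block_corr_stage.
Qed.

Definition delta (t u : stage) : R := (u == t)%:R.

Lemma delta_block t u : block t != block u -> delta t u = 0.
Proof. by rewrite /delta; case: (u =P t) => [->|]; rewrite ?eqxx. Qed.

Lemma pred_stageE (m : 'I_M) i : pred_stage m i = inl (m, i).
Proof. by rewrite /pred_stage inord_val. Qed.

Lemma corr_stageE (k : 'I_K) (m : 'I_M) i : corr_stage k.+1 m i = inr (k, m, i).
Proof. by rewrite /corr_stage /= valK inord_val. Qed.

Definition mu : R := M%:R^-1.

(* With stage values [Y], the approximation [y^(k)_m] of sweep [k] is
   [y_n + H * \sum_u sweep_row k m u *: F (Y u)] and stage [t] satisfies
   [Y t = y_n + H * \sum_u stage_row t u *: F (Y u)]; the [_incr] rows are the
   contributions of a single substep. *)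
Definition pred_incr (m : nat) (coef : 'I_s0.+1 -> R) (u : stage) : R :=
  \sum_(j < s0.+1) coef j * delta (pred_stage m j) u.

Definition corr_incr (k m : nat) (ci : R) (coef : 'I_s.+1 -> R) (u : stage) : R :=
  \sum_(j < M) int_weight m ci j * delta (last_stage k.-1 j) u +
  \sum_(i < s.+1) coef i * (delta (corr_stage k m i) u -
     \sum_(l < M) interp_weight m (c i) l * delta (last_stage k.-1 l) u).

Definition sweep_incr (k m : nat) : stage -> R :=
  if k is 0 then pred_incr m b0 else corr_incr k m 1 b.

Definition sweep_row (k m : nat) (u : stage) : R :=
  mu * \sum_(l < m) sweep_incr k l u.

Definition stage_row (t : stage) (u : stage) : R :=
  match t with
  | inl p => sweep_row 0 p.1 u + mu * pred_incr p.1 (A0 p.2) u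
  | inr p =>
      sweep_row p.1.1.+1 p.1.2 u + mu * corr_incr p.1.1.+1 p.1.2 (c p.2) (A p.2) u
  end.

Lemma sweep_rowS k m u : sweep_row k m.+1 u = sweep_row k m u + mu * sweep_incr k m u.
Proof. by rewrite /sweep_row big_ord_recr mulrDr. Qed.

Lemma stage_row_pred m i u : (m < M)%N ->
  stage_row (pred_stage m i) u = sweep_row 0 m u + mu * pred_incr m (A0 i) u.
Proof. by move=> mM; rewrite /= inordK. Qed.

Lemma stage_row_corr k m i u : (0 < k <= K)%N -> (m < M)%N ->
  stage_row (corr_stage k m i) u = sweep_row k m u + mu * corr_incr k m (c i) (A i) u.
Proof. by case: k => // k kK mM; rewrite /corr_stage /= insubT /= inordK. Qed.

Hypotheses (sA0 : stiffly_accurate A0 b0) (sA : stiffly_accurate A b).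
Hypothesis c_last : c ord_max = 1.

Lemma stage_row_last k m u : (k <= K)%N -> (m < M)%N ->
  stage_row (last_stage k m) u = sweep_row k m.+1 u.
Proof.
case: k => [|k] kK mM; rewrite sweep_rowS.
  by rewrite stage_row_pred //; congr (_ + _ * _); apply: eq_bigr => j _; rewrite sA0.
rewrite stage_row_corr // c_last; congr (_ + _ * (_ + _)).
by apply: eq_bigr => j _; rewrite sA.
Qed.

Lemma pred_incr_block m coef u : (m < M)%N -> block u != m -> pred_incr m coef u = 0.
Proof.
move=> mM um; rewrite /pred_incr big1 // => j _.
by rewrite delta_block ?mulr0 // block_pred_stage // eq_sym.
Qed.

Lemma corr_incr_diag k m ci coef u : (0 < k <= K)%N -> (k * M <= block u)%N ->
  corr_incr k m ci coef u = \sum_(i < s.+1) coef i * delta (corr_stage k m i) u.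
Proof.
move=> kK ku; have past (j : 'I_M) : delta (last_stage k.-1 j) u = 0.
  have jM := ltn_ord j; rewrite delta_block // block_last_stage //; last by lia.
  by case: k kK ku => // k _; rewrite mulSn /=; lia.
rewrite /corr_incr big1 ?add0r => [|j _]; last by rewrite past mulr0.
by apply: eq_bigr => i _; rewrite big1 ?subr0 // => l _; rewrite past mulr0.
Qed.

Lemma sweep_incr_block k m u : (k <= K)%N -> (m < M)%N ->
  (k * M + m < block u)%N -> sweep_incr k m u = 0.
Proof.
case: k => [|k] kK mM ku /=; first by rewrite pred_incr_block //; lia.
rewrite corr_incr_diag //; last by lia.
by rewrite big1 // => i _; rewrite delta_block ?mulr0 // block_corr_stage //; lia.
Qed.

Lemma sweep_row_block k m u : (k <= K)%N -> (m <= M)%N ->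
  (k * M + m <= block u)%N -> sweep_row k m u = 0.
Proof.
move=> kK mM ku; rewrite /sweep_row big1 ?mulr0 // => l _.
by apply: sweep_incr_block => //; have := ltn_ord l; lia.
Qed.

Lemma stage_row_lower t u : (block t < block u)%N -> stage_row t u = 0.
Proof.
case: t => [[m i]|[[k m] i]] /= tu; have mM := ltn_ord m; have mM' := ltnW mM.
  by rewrite sweep_row_block ?pred_incr_block ?add0r ?mulr0 //; lia.
have kK : (0 < k.+1 <= K)%N by rewrite /= ltn_ord.
rewrite sweep_row_block ?corr_incr_diag ?add0r //; try lia.
rewrite big1 ?mulr0 // => j _.
by rewrite delta_block ?mulr0 // block_corr_stage //; lia.
Qed.

Lemma sum_delta_inj n (a : 'I_n -> R) (g : 'I_n -> stage) j : injective g ->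
  \sum_(j' < n) a j' * delta (g j') (g j) = a j.
Proof.
move=> gI; rewrite (bigD1 j) //= /delta eqxx mulr1 big1 ?addr0 // => j' j'j.
by rewrite (inj_eq gI) eq_sym (negbTE j'j) mulr0.
Qed.

Lemma stage_row_diag_pred (m : 'I_M) i j :
  stage_row (inl (m, i)) (inl (m, j)) = mu * A0 i j.
Proof.
rewrite /= sweep_row_block ?add0r ?(ltnW (ltn_ord m)) //; congr (_ * _).
rewrite /pred_incr; under eq_bigr do rewrite pred_stageE.
have inj_m : injective (fun j => inl (m, j) : stage) by move=> j1 j2 [].
exact: (@sum_delta_inj _ (A0 i) _ j inj_m).
Qed.

Lemma stage_row_diag_corr (k : 'I_K) (m : 'I_M) i j :
  stage_row (inr (k, m, i)) (inr (k, m, j)) = mu * A i j.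
Proof.
have kK : (0 < k.+1 <= K)%N by rewrite /= ltn_ord.
rewrite /= sweep_row_block ?corr_incr_diag ?add0r ?(ltnW (ltn_ord m)) //=; try lia.
congr (_ * _); under eq_bigr do rewrite corr_stageE.
have inj_km : injective (fun j => inr (k, m, j) : stage) by move=> j1 j2 [].
exact: (@sum_delta_inj _ (A i) _ j inj_km).
Qed.

Lemma block_fibre_pred (m : 'I_M) i t :
  block t = block (inl (m, i)) -> t \in codom (fun j => inl (m, j) : stage).
Proof.
case: t => [[m' j]|[[k' m'] j]] /= tm; last by have := ltn_ord m; lia.
by apply/codomP; exists j; congr (inl (_, _)); apply: ord_inj.
Qed.

Lemma block_fibre_corr (k : 'I_K) (m : 'I_M) i t :
  block t = block (inr (k, m, i)) -> t \in codom (fun j => inr (k, m, j) : stage).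
Proof.
case: t => [[m' j]|[[k' m'] j]] /= tkm; first by have := ltn_ord m'; lia.
have [mM m'M] := (ltn_ord m, ltn_ord m').
have kk' : k' = k :> nat by nia.
by apply/codomP; exists j; congr (inr (_, _, _)); apply: ord_inj => //; nia.
Qed.

Hypotheses (uA0 : A0 \in unitmx) (uA : A \in unitmx).

Lemma stage_row_free : rows_free stage_row.
Proof.
apply: (@block_triangular_rows_free _ _ block) => [t u|w t0 wt0 wdiag].
  exact: stage_row_lower.
have mu_unit : mu \is a GRing.unit by rewrite unitfE invr_eq0 pnatr_eq0.
case: t0 wt0 wdiag => [[m i]|[[k m] i]] wt0 wdiag.
  apply: (@diag_block_vanish _ _ _ (fun j => inl (m, j)) (mu *: A0) stage_row).
  - by move=> j j' [].
  - by rewrite unitmxZ.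
  - by move=> j j'; rewrite mxE -(stage_row_diag_pred m).
  - by move=> t tg; apply: wt0; apply: contra tg => /eqP; apply: block_fibre_pred.
  - by move=> j; apply: wdiag.
apply: (@diag_block_vanish _ _ _ (fun j => inr (k, m, j)) (mu *: A) stage_row).
- by move=> j j' [].
- by rewrite unitmxZ.
- by move=> j j'; rewrite mxE -(stage_row_diag_corr k m).
- by move=> t tg; apply: wt0; apply: contra tg => /eqP; apply: block_fibre_corr.
- by move=> j; apply: wdiag.
Qed.

Variables (d : nat) (F : 'rV[R]_d -> 'rV[R]_d) (tn H : R) (yn : 'rV[R]_d).
Local Notation V := 'rV[R]_d.
Local Notation h := (substep M H).

Section Combinations.
Variable Y : stage -> V.

Definition comb (r : stage -> R) : V := \sum_u r u *: F (Y u).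

Lemma comb_ext r r' : (forall u, r u = r' u) -> comb r = comb r'.
Proof. by move=> rr'; apply: eq_bigr => u _; rewrite rr'. Qed.

Lemma comb_add r r' : comb (fun u => r u + r' u) = comb r + comb r'.
Proof. by rewrite /comb -big_split; apply: eq_bigr => u _; rewrite scalerDl. Qed.

Lemma comb_sub r r' : comb (fun u => r u - r' u) = comb r - comb r'.
Proof. by rewrite /comb -sumrB; apply: eq_bigr => u _; rewrite scalerBl. Qed.

Lemma comb_scale a r : comb (fun u => a * r u) = a *: comb r.
Proof. by rewrite /comb scaler_sumr; apply: eq_bigr => u _; rewrite scalerA. Qed.

Lemma comb_sum n (r : 'I_n -> stage -> R) :
  comb (fun u => \sum_(i < n) r i u) = \sum_(i < n) comb (r i).
Proof. by rewrite /comb exchange_big; apply: eq_bigr => u _; rewrite scaler_suml. Qed.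

Lemma comb_delta t : comb (delta t) = F (Y t).
Proof.
rewrite /comb (bigD1 t) //= /delta eqxx scale1r big1 ?addr0 // => u /negbTE ->.
by rewrite scale0r.
Qed.

Lemma comb_delta_sum n (a : 'I_n -> R) (t : 'I_n -> stage) :
  comb (fun u => \sum_(i < n) a i * delta (t i) u) = \sum_(i < n) a i *: F (Y (t i)).
Proof.
rewrite comb_sum; apply: eq_bigr => i _.
by rewrite (comb_scale (a i) (delta (t i))) comb_delta.
Qed.

Lemma comb_pred_incr m coef :
  comb (pred_incr m coef) = \sum_(j < s0.+1) coef j *: F (Y (pred_stage m j)).
Proof. exact: comb_delta_sum. Qed.

Lemma comb_corr_incr k m ci coef : comb (corr_incr k m ci coef) =
  \sum_(j < M) int_weight m ci j *: F (Y (last_stage k.-1 j)) +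
  \sum_(i < s.+1) coef i *: (F (Y (corr_stage k m i)) -
     \sum_(l < M) interp_weight m (c i) l *: F (Y (last_stage k.-1 l))).
Proof.
rewrite comb_add comb_delta_sum comb_sum; congr (_ + _); apply: eq_bigr => i _.
by rewrite comb_scale comb_sub comb_delta comb_delta_sum.
Qed.

Definition sweep_val (k m : nat) : V := yn + H *: comb (sweep_row k m).

Lemma sweep_val0 k : sweep_val k 0 = yn.
Proof.
rewrite /sweep_val /comb big1 ?scaler0 ?addr0 // => u _.
by rewrite /sweep_row big_ord0 mulr0 scale0r.
Qed.

Lemma sweep_valS k m : sweep_val k m.+1 = sweep_val k m + h *: comb (sweep_incr k m).
Proof.
rewrite /sweep_val (comb_ext (sweep_rowS k m)) comb_add comb_scale.
by rewrite scalerDr scalerA addrA.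
Qed.

Lemma stage_val_pred m i : (m < M)%N ->
  yn + H *: comb (stage_row (pred_stage m i)) =
  sweep_val 0 m + h *: comb (pred_incr m (A0 i)).
Proof.
move=> mM; rewrite (comb_ext (fun u => stage_row_pred i u mM)) comb_add comb_scale.
by rewrite scalerDr scalerA addrA.
Qed.

Lemma stage_val_corr k m i : (0 < k <= K)%N -> (m < M)%N ->
  yn + H *: comb (stage_row (corr_stage k m i)) =
  sweep_val k m + h *: comb (corr_incr k m (c i) (A i)).
Proof.
move=> kK mM; rewrite (comb_ext (fun u => stage_row_corr i u kK mM)).
by rewrite comb_add comb_scale scalerDr scalerA addrA.
Qed.

Lemma stage_val_last k m : (k <= K)%N -> (m < M)%N ->
  yn + H *: comb (stage_row (last_stage k m)) = sweep_val k m.+1.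
Proof. by move=> kK mM; rewrite (comb_ext (fun u => stage_row_last u kK mM)). Qed.

Lemma corr_update (yprev : nat -> V) k m ci coef :
  (forall j : 'I_M, Y (last_stage k.-1 j) = yprev j.+1) ->
  h *: S_c tn H m ci (fun j : 'I_M => F (yprev j.+1)) +
  h *: \sum_(i < s.+1) coef i *:
         (F (Y (corr_stage k m i)) - P_c tn H m (c i) (fun j : 'I_M => F (yprev j.+1)))
  = h *: comb (corr_incr k m ci coef).
Proof.
move=> Ylast; rewrite scale_S_c scale_sum_P_c -scalerDr comb_corr_incr.
congr (_ *: (_ + _)); apply: eq_bigr => i _; rewrite ?Ylast //.
by congr (_ *: (_ - _)); apply: eq_bigr => l _; rewrite Ylast.
Qed.

End Combinations.

Lemma InDC_output_RK_on yout : InDC_output M K A0 b0 A b c F tn H yn yout ->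
  RK_output_on stage_row (sweep_row K M) F H yn yout.
Proof.
move=> [y [Yp [Yc]]] /= [y00 [hYp [hy0 [hyk0 [hYc [hyk ->]]]]]].
pose Y (t : stage) := match t with
  | inl p => Yp p.1 p.2 | inr p => Yc p.1.1.+1 p.1.2 p.2 end.
have Y_pred m i : (m < M)%N -> Y (pred_stage m i) = Yp m i.
  by move=> mM; rewrite /= inordK.
have Y_corr k m i : (0 < k <= K)%N -> (m < M)%N -> Y (corr_stage k m i) = Yc k m i.
  by case: k => // k kK mM; rewrite /corr_stage /= insubT /= inordK.
have Y_last k j : (k <= K)%N -> (j < M)%N -> Y (last_stage k j) = y k j.+1.
  case: k => [|k] kK jM.
    rewrite -[last_stage 0%N j]/(pred_stage j ord_max) Y_pred // hYp // hy0 //.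
    by congr (_ + _ *: _); apply: eq_bigr => i _; rewrite sA0.
  rewrite -[last_stage _ j]/(corr_stage k.+1 j ord_max) Y_corr // hYc // hyk //.
  rewrite c_last S_int_S_c; congr (_ + _ *: _).
  by apply: eq_bigr => i _; rewrite sA.
have Y_prev k : (0 < k <= K)%N -> forall j : 'I_M, Y (last_stage k.-1 j) = y k.-1 j.+1.
  by move=> /andP[k0 kK] j; rewrite Y_last // (leq_trans (leq_pred k)).
have y_sweep k m : (k <= K)%N -> (m <= M)%N -> y k m = sweep_val Y k m.
  move=> kK; elim: m => [_|m IH mM].
    by rewrite sweep_val0; case: k kK => [|k] kK; rewrite ?y00 ?hyk0.
  rewrite sweep_valS -IH ?(ltnW mM) //; case: k kK {IH} => [|k] kK /=.
    by rewrite hy0 // comb_pred_incr; under [in RHS]eq_bigr do rewrite Y_pred //.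
  rewrite hyk // S_int_S_c -addrA -(corr_update _ _ _ (Y_prev k.+1 kK)).
  by congr (_ + (_ + _ *: _)); apply: eq_bigr => i _; rewrite Y_corr.
exists Y; split=> [[[m i]|[[k m] i]]|]; last by rewrite y_sweep.
  rewrite -pred_stageE Y_pred // hYp // stage_val_pred //.
  rewrite -y_sweep ?(ltnW (ltn_ord m)) //.
  by rewrite comb_pred_incr; congr (_ + _ *: _); apply: eq_bigr => j _; rewrite Y_pred.
have kK : (0 < k.+1 <= K)%N by rewrite /= ltn_ord.
rewrite -corr_stageE Y_corr // hYc // stage_val_corr //.
rewrite -y_sweep ?(ltnW (ltn_ord m)) ?(ltnW kK) // -addrA.
rewrite -(corr_update _ _ _ (Y_prev _ kK)).
by congr (_ + (_ + _ *: _)); apply: eq_bigr => j _; rewrite Y_corr.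
Qed.

Lemma RK_on_InDC_output yout : RK_output_on stage_row (sweep_row K M) F H yn yout ->
  InDC_output M K A0 b0 A b c F tn H yn yout.
Proof.
move=> [Y [hY ->]]; pose y := sweep_val Y.
have Y_prev k : (0 < k <= K)%N -> forall j : 'I_M, Y (last_stage k.-1 j) = y k.-1 j.+1.
  move=> /andP[k0 kK] j; rewrite hY stage_val_last //.
  exact: leq_trans (leq_pred k) kK.
exists y, (fun m i => Y (pred_stage m i)), (fun k m i => Y (corr_stage k m i)) => /=.
split; first exact: sweep_val0.
split; first by move=> m i mM; rewrite hY stage_val_pred // comb_pred_incr.
split; first by move=> m mM; rewrite /y sweep_valS comb_pred_incr.
split; first by move=> k _; apply: sweep_val0.
split.
  move=> k m i kK mM; rewrite hY stage_val_corr // -[RHS]addrA.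
  by rewrite (corr_update _ _ _ (Y_prev _ kK)).
split=> // k m kK mM.
rewrite /y sweep_valS S_int_S_c -[RHS]addrA (corr_update _ _ _ (Y_prev _ kK)).
by case: k kK.
Qed.

End InDCTableau.

Theorem proposition7p2 (R : realFieldType) (M K : nat)
    (s0 : nat) (A0 : 'M[R]_s0.+1) (b0 : 'I_s0.+1 -> R)
    (s : nat) (A : 'M[R]_s.+1) (b : 'I_s.+1 -> R) (c : 'I_s.+1 -> R) :
  (0 < M)%N ->
  stiffly_accurate A0 b0 -> A0 \in unitmx ->
  stiffly_accurate A b -> A \in unitmx -> c ord_max = 1 ->
  exists (N : nat) (AA : 'M[R]_N.+1) (bb : 'I_N.+1 -> R),
    [/\ stiffly_accurate AA bb, AA \in unitmx &
        forall (d : nat) (F : 'rV[R]_d -> 'rV[R]_d) (tn H : R) (yn yout : 'rV[R]_d),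
          InDC_output M K A0 b0 A b c F tn H yn yout <-> RK_output AA bb F H yn yout].
Proof.
case: M => [//|M'] _ sA0 uA0 sA uA c_last.
have [e [e_bij e_last]] := ord_bij_last (last_stage M' K s0 s K M').
exists _, (\matrix_(i, j) stage_row A0 b0 A b c (e i) (e j)),
  (fun j => sweep_row b0 b c K M'.+1 (e j)); split.
- by move=> j; rewrite mxE e_last stage_row_last.
- exact: rows_free_unitmx e_bij (stage_row_free uA0 uA).
move=> d F tn H yn yout; rewrite RK_output_relabel //.
by split; [apply: InDC_output_RK_on | apply: RK_on_InDC_output].
Qed.
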